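(* Let $\mathfrak B,\mathfrak D^+,\mathfrak D^-$ be Banach spaces and let $I^+\colon\mathfrak D^+\to\mathfrak B$, $I^-\colon\mathfrak B\to\mathfrak D^-$ be injective continuous linear embeddings with dense ranges. Let $T\colon\mathfrak D^+\to\mathfrak D^-$ be a bounded linear operator, and let $T^\bullet=(I^-)^{-1}T(I^+)^{-1}$ be the operator in $\mathfrak B$ with domain $\{x\in I^+(\mathfrak D^+)\;:\;T(I^+)^{-1}x\in I^-(\mathfrak B)\}$, acting by $T^\bullet x=(I^-)^{-1}T(I^+)^{-1}x$. Suppose that for some $A\in\mathcal B(\mathfrak B)$ the operator $T-I^-AI^+$ has a bounded inverse. Then for every $\lambda$ in the resolvent set $\varrho(T^\bullet)$ the operator $T-\lambda I^-I^+\colon\mathfrak D^+\to\mathfrak D^-$ also has a bounded inverse.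
   Context: ''Has a bounded inverse'' means: the operator is a bijection of $\mathfrak D^+$ onto $\mathfrak D^-$ with bounded inverse. *)

From HB Require Import structures.
From mathcomp Require Import all_boot all_order all_algebra.
From mathcomp Require Import all_classical all_reals all_analysis.
Set Implicit Arguments. Unset Strict Implicit. Unset Printing Implicit Defensive.
Import Order.TTheory GRing.Theory Num.Theory.
Import numFieldNormedType.Exports.
Local Open Scope classical_set_scope.
Local Open Scope ring_scope.

(* "f : U -> V has a bounded inverse": f is a bijection of U onto V whose
   inverse is bounded (= continuous, the inverse of a linear map being linear). *)
Definition has_bounded_inverse (K : numFieldType) (U V : normedModType K)
  (f : U -> V) : Prop :=
  exists g : V -> U, cancel f g /\ cancel g f /\ continuous g.

Definition bullet_dom (K : numFieldType) (Dp B Dm : normedModType K)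
  (Ip : Dp -> B) (Im : B -> Dm) (T : Dp -> Dm) : set B :=
  [set x | exists u, x = Ip u /\ exists y, T u = Im y].

(* Action of T^bullet: for x in the domain, the unique y with
   I^- y = T (I^+)^{-1} x (outside the domain the value is irrelevant). *)
Definition bullet (K : numFieldType) (Dp B Dm : normedModType K)
  (Ip : Dp -> B) (Im : B -> Dm) (T : Dp -> Dm) (x : B) : B :=
  get [set y | exists u, x = Ip u /\ T u = Im y].

Definition resolvent_set (K : numFieldType) (B : normedModType K)
  (D : set B) (S : B -> B) : set K :=
  [set lam | exists R : B -> B,
     continuous R /\
     (forall g, D (R g) /\ S (R g) - lam *: R g = g) /\
     (forall x, D x -> R (S x - lam *: x) = x)].

From HB Require Import structures.
From mathcomp Require Import all_boot all_order all_algebra.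
From mathcomp Require Import all_classical all_reals all_analysis.
Set Implicit Arguments. Unset Strict Implicit. Unset Printing Implicit Defensive.
Import Order.TTheory GRing.Theory Num.Theory.
Import numFieldNormedType.Exports.
Local Open Scope classical_set_scope.
Local Open Scope ring_scope.

(* Put S_lam := T - lam I^- I^+ and S_A := T - I^- A I^+, so that
   S_lam = S_A - I^- (lam - A) I^+.  For g in B the resolvent R of T^bullet
   gives R g = I^+ v with S_lam v = I^- g, and v depends continuously on g
   because v = G (S_A v), G being the bounded inverse of S_A.  Hence
   y |-> G y + v((lam - A) I^+ G y) is a bounded right inverse of S_lam.
   A kernel vector w of S_lam has T^bullet (I^+ w) = lam I^+ w, so
   injectivity of T^bullet - lam makes S_lam injective. *)

Section Pencil.
Variables (K : numFieldType) (Dp B Dm : normedModType K).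
Variables (Ip : {linear Dp -> B}) (Im : {linear B -> Dm}) (T : {linear Dp -> Dm}).
Hypotheses (Ip_inj : injective Ip) (Im_inj : injective Im).

Local Notation Tb := (bullet Ip Im T).
Local Notation Db := (bullet_dom Ip Im T).

Lemma bulletE {u y} : T u = Im y -> Tb (Ip u) = y.
Proof.
move=> Tu; have : exists y0, [set y | exists u0, Ip u = Ip u0 /\ T u0 = Im y] y0.
  by exists y, u.
by move=> /getPex [u0 [/Ip_inj <- Tu0]]; apply: Im_inj; rewrite -Tu0 Tu.
Qed.

Lemma bullet_domP x : Db x -> exists2 u, x = Ip u & T u = Im (Tb x).
Proof. by case=> u [-> [y Tu]]; exists u; rewrite // (bulletE Tu). Qed.

Lemma bullet_dom_Ip {u y} : T u = Im y -> Db (Ip u).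
Proof. by move=> Tu; exists u; split; last exists y. Qed.

Lemma bullet0 : Tb 0 = 0.
Proof. by rewrite -(linear0 Ip) (@bulletE 0 0) // !linear0. Qed.

Variables (lam : K) (R : B -> B).

Section LeftInverse.
Hypothesis R_left : forall x, Db x -> R (Tb x - lam *: x) = x.

Lemma resolvent_pencil_kernel w : T w - lam *: Im (Ip w) = 0 -> w = 0.
Proof.
move=> /eqP; rewrite subr_eq0 -linearZ => /eqP Tw.
have R0 : R 0 = 0.
  have T0 : T 0 = Im 0 by rewrite !linear0.
  by have := R_left (bullet_dom_Ip T0); rewrite linear0 bullet0 scaler0 subr0.
have := R_left (bullet_dom_Ip Tw); rewrite (bulletE Tw) subrr R0.
by rewrite -(linear0 Ip) => /Ip_inj.
Qed.

Lemma resolvent_pencil_injective :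
  injective (fun u : Dp => T u - lam *: Im (Ip u)).
Proof.
move=> u1 u2 /eqP; rewrite -subr_eq0 => /eqP h12; apply/eqP; rewrite -subr_eq0.
apply/eqP/resolvent_pencil_kernel.
by rewrite -[RHS]h12 !raddfB /= addrACA.
Qed.
End LeftInverse.

Hypothesis R_right : forall g, Db (R g) /\ Tb (R g) - lam *: R g = g.

Lemma resolvent_preimage g : exists2 v, R g = Ip v & T v = Im (g + lam *: R g).
Proof.
have [/bullet_domP [v RgE Tv] Rg] := R_right g.
by exists v; rewrite // Tv -[X in Im (X + _)]Rg subrK.
Qed.

Variables (A : {linear B -> B}) (G : Dm -> Dp).
Hypotheses (GK : cancel (fun u : Dp => T u - Im (A (Ip u))) G)
           (KG : cancel G (fun u : Dp => T u - Im (A (Ip u)))).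

(* The v with R g = I^+ v, computed as G (S_A v). *)
Definition resolvent_lift g := G (Im (g + lam *: R g - A (R g))).

Lemma resolvent_liftP g :
  R g = Ip (resolvent_lift g) /\ T (resolvent_lift g) = Im (g + lam *: R g).
Proof.
have [v RgE Tv] := resolvent_preimage g.
suff -> : resolvent_lift g = v by [].
by rewrite /resolvent_lift -[RHS]GK /= Tv -RgE linearB.
Qed.

Lemma pencil_resolvent_lift g :
  T (resolvent_lift g) - lam *: Im (Ip (resolvent_lift g)) = Im g.
Proof.
by have [<- ->] := resolvent_liftP g; rewrite linearD linearZ addrK.
Qed.

Definition pencil_inverse y :=
  G y + resolvent_lift (lam *: Ip (G y) - A (Ip (G y))).

Lemma pencil_inverseK : cancel pencil_inverse (fun u => T u - lam *: Im (Ip u)).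
Proof.
move=> y; rewrite /pencil_inverse !raddfD /= addrACA.
rewrite pencil_resolvent_lift [Im (_ - _)]linearB [Im (_ *: _)]linearZ.
by rewrite addrA subrK KG.
Qed.

Section Continuity.
Hypotheses (Ip_cont : continuous Ip) (Im_cont : continuous Im)
           (A_cont : continuous A) (G_cont : continuous G) (R_cont : continuous R).

Lemma resolvent_lift_continuous : continuous resolvent_lift.
Proof.
have arg_cont : continuous (fun g => g + lam *: R g - A (R g)).
  move=> g; exact: continuousB
    (continuousD cvg_id (continuousZl_tmp (@R_cont g)))
    (continuous_comp (@R_cont g) (@A_cont _)).
move=> g; exact: continuous_comp
  (continuous_comp (@arg_cont g) (@Im_cont _)) (@G_cont _).
Qed.

Lemma pencil_inverse_continuous : continuous pencil_inverse.
Proof.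
have IpG_cont : continuous (Ip \o G).
  by move=> y; exact: continuous_comp (@G_cont y) (@Ip_cont _).
have arg_cont : continuous (fun y => lam *: Ip (G y) - A (Ip (G y))).
  by move=> y; exact: continuousB (continuousZl_tmp (@IpG_cont y))
    (continuous_comp (@IpG_cont y) (@A_cont _)).
move=> y; exact: continuousD (@G_cont y)
  (continuous_comp (@arg_cont y) (@resolvent_lift_continuous _)).
Qed.
End Continuity.
End Pencil.

Theorem mainTheorem3 (K : numFieldType) (Dp B Dm : completeNormedModType K)
  (Ip : {linear Dp -> B}) (Im : {linear B -> Dm}) (T : {linear Dp -> Dm})
  (A : {linear B -> B}) :
  continuous Ip -> injective Ip -> dense (range Ip) ->
  continuous Im -> injective Im -> dense (range Im) ->
  continuous T -> continuous A ->
  has_bounded_inverse (fun u : Dp => T u - Im (A (Ip u))) ->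
  forall lam : K, resolvent_set (bullet_dom Ip Im T) (bullet Ip Im T) lam ->
  has_bounded_inverse (fun u : Dp => T u - lam *: Im (Ip u)).
Proof.
move=> Ip_cont Ip_inj _ Im_cont Im_inj _ _ A_cont [G [GK [KG G_cont]]].
move=> lam [R [R_cont [R_right R_left]]].
have invK := pencil_inverseK Ip_inj Im_inj R_right GK KG.
exists (pencil_inverse Ip Im lam R A G); split; last split => //.
  exact: inj_can_sym invK (resolvent_pencil_injective Ip_inj Im_inj R_left).
exact: pencil_inverse_continuous.
Qed.
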